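(* Let $\mathfrak{g}$ be a finite-dimensional complex Lie algebra and let $a\in\mathfrak{g}^*$ be regular. Then the algebra of shifts of semi-invariants $\mathcal{F}^{\mathrm{si}}_a$ is commutative with respect to both the Lie–Poisson bracket $\{\cdot,\cdot\}$ and the frozen argument bracket $\{\cdot,\cdot\}_a$.
   Context: $S(\mathfrak{g})$ is identified with polynomial functions on $\mathfrak{g}^*$; $df(x)\in\mathfrak{g}\simeq T^*_x\mathfrak{g}^*$. Lie–Poisson bracket: $\{f,h\}(x)=\langle x,[df(x),dh(x)]\rangle$; frozen argument bracket: $\{f,h\}_a(x)=\langle a,[df(x),dh(x)]\rangle$. $\mathfrak{g}_x=\{\xi\in\mathfrak{g}\mid \operatorname{ad}^*_\xi x=0\}$, $\operatorname{ind}\mathfrak{g}=\min_x\dim\mathfrak{g}_x$, $a$ regular means $\dim\mathfrak{g}_a=\operatorname{ind}\mathfrak{g}$. Algebra of shifts $\mathcal{F}_a$: choose $m=\operatorname{ind}\mathfrak{g}$ local analytic invariants $f_1,\dots,f_m$ of the coadjoint representation near $a$ with $df_i(a)$ a basis of $\mathfrak{g}_a$; expand $f_i(a+\lambda x)=\sum_{j\ge0}f_{ij}(x)\lambda^j$; $\mathcal{F}_a$ is generated by all $f_{ij}$, $j>0$. A nonzero $g\in S(\mathfrak{g})$ is a semi-invariant with weight $\chi_g\in\mathfrak{g}^*$ if $\{f,g\}(x)=\chi_g(df(x))g(x)$ for all $f\in S(\mathfrak{g})$. $\mathcal{F}^{\mathrm{si}}_a$ is the subalgebra of $S(\mathfrak{g})$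 generated by $\mathcal{F}_a$ and all functions $x\mapsto g(x+\lambda a)$ for all semi-invariants $g$ and all $\lambda\in\mathbb{C}$. *)

(* complex numbers R[i] over a realType R (= the field C),
   polynomials S(g) = {mpoly C[n]} (multinomials), linear algebra via mxalgebra. *)
From HB Require Import structures.
From mathcomp Require Import all_boot all_order all_algebra.
From mathcomp Require Import reals.
From mathcomp Require Import complex.
From mathcomp Require Import mpoly.
Set Implicit Arguments. Unset Strict Implicit. Unset Printing Implicit Defensive.
Import GRing.Theory Num.Theory.
Local Open Scope ring_scope.

Section LieDefs.
Variable R : realType.
Local Notation C := R[i].
Variable n : nat.

(* g = C^n (row vectors w.r.t. a basis), g^* = C^n via the dual basis. *)
Definition is_lie_bracket (lie : 'rV[C]_n -> 'rV[C]_n -> 'rV[C]_n) : Prop :=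
  [/\ (forall (c : C) x y z, lie (c *: x + y) z = c *: lie x z + lie y z),
      (forall (c : C) x y z, lie x (c *: y + z) = c *: lie x y + lie x z),
      (forall x, lie x x = 0) &
      (forall x y z, lie x (lie y z) + lie y (lie z x) + lie z (lie x y) = 0)].

Definition pairing (x xi : 'rV[C]_n) : C := \sum_(k < n) x 0 k * xi 0 k.

Definition valu (x : 'rV[C]_n) : 'I_n -> C := fun k => x 0 k.

Definition grad (f : {mpoly C[n]}) (x : 'rV[C]_n) : 'rV[C]_n :=
  \row_(k < n) (mderiv k f).@[valu x].

Variable lie : 'rV[C]_n -> 'rV[C]_n -> 'rV[C]_n.

Definition lp_bracket (f h : {mpoly C[n]}) (x : 'rV[C]_n) : C :=
  pairing x (lie (grad f x) (grad h x)).

Definition frozen_bracket (a : 'rV[C]_n) (f h : {mpoly C[n]}) (x : 'rV[C]_n) : C :=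
  pairing a (lie (grad f x) (grad h x)).

(* the matrix (<x,[e_i,e_j]>)_{i,j}; g_x = {xi | ad^*_xi x = 0} is its row kernel,
   i.e. xi \in g_x  <->  forall eta, <x,[xi,eta]> = 0 *)
Definition bracket_form (x : 'rV[C]_n) : 'M[C]_n :=
  \matrix_(i < n, j < n) pairing x (lie (delta_mx 0 i) (delta_mx 0 j)).

Definition stab_mx (x : 'rV[C]_n) : 'M[C]_n := kermx (bracket_form x).

Definition stab_dim (x : 'rV[C]_n) : nat := \rank (stab_mx x).

Definition is_index (k : nat) : Prop :=
  (exists x, stab_dim x = k) /\ (forall x, (k <= stab_dim x)%N).

Definition regular (a : 'rV[C]_n) : Prop := is_index (stab_dim a).

(* A germ of analytic function at a, given by its Taylor expansion
   f(a + y) = \sum_j F j (y), F j homogeneous of degree j;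
   analyticity = Cauchy-type bound on the coefficients. *)
Definition analytic_germ (F : nat -> {mpoly C[n]}) : Prop :=
  (forall j, F j \is j.-homog) /\
  exists M r : R, 0 < r /\
    forall j m, `|(F j)@_m| <= ((M / r ^+ j)%:C)%C.

(* local invariant of the coadjoint representation near a:
   <x, [xi, df(x)]> = 0 for all xi and all x near a, written out degree by degree
   in y = x - a (identity of convergent power series). *)
Definition local_invariant_at (a : 'rV[C]_n) (F : nat -> {mpoly C[n]}) : Prop :=
  analytic_germ F /\
  forall (d : nat) (xi y : 'rV[C]_n),
    pairing a (lie xi (grad (F d.+1) y)) + pairing y (lie xi (grad (F d) y)) = 0.

(* df(a) for the germ F: the gradient of the linear part *)
Definition germ_diff_at (F : nat -> {mpoly C[n]}) : 'rV[C]_n := grad (F 1%N) 0.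

Definition semi_invariant (g : {mpoly C[n]}) : Prop :=
  g != 0 /\ exists chi : 'rV[C]_n,
    forall (f : {mpoly C[n]}) (x : 'rV[C]_n),
      lp_bracket f g x = pairing chi (grad f x) * g.@[valu x].

Definition shift_poly (a : 'rV[C]_n) (lambda : C) (g : {mpoly C[n]}) : {mpoly C[n]} :=
  g \mPo [tuple 'X_k + (lambda * a 0 k)%:MP | k < n].

End LieDefs.

Inductive gen_subalg (K : comNzRingType) (n : nat) (S : {mpoly K[n]} -> Prop)
  : {mpoly K[n]} -> Prop :=
| gen_base p : S p -> gen_subalg S p
| gen_const c : gen_subalg S c%:MP
| gen_add p q : gen_subalg S p -> gen_subalg S q -> gen_subalg S (p + q)
| gen_mul p q : gen_subalg S p -> gen_subalg S q -> gen_subalg S (p * q).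

(* generators of F_a^si, for a chosen family f of m local invariants *)
Definition Fsi_generators (R : realType) (n : nat)
  (lie : 'rV[R[i]]_n -> 'rV[R[i]]_n -> 'rV[R[i]]_n) (a : 'rV[R[i]]_n) (m : nat)
  (f : 'I_m -> nat -> {mpoly R[i][n]}) (p : {mpoly R[i][n]}) : Prop :=
  (exists (k : 'I_m) (j : nat), (0 < j)%N /\ p = f k j) \/
  (exists (g : {mpoly R[i][n]}) (lambda : R[i]),
      semi_invariant lie g /\ p = shift_poly a lambda g).

(* Shifts [f_ij] of local invariants obey the Lenard
   recursion <a, [xi, df_(j+1)(y)]> = - <y, [xi, df_j(y)]>, which makes them pairwise
   commute for both brackets (Mishchenko-Fomenko).  A semi-invariant g of weight chi
   satisfies {xi, g} = chi(xi) g for linear xi; the Jacobi identity forces chi to vanish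
   on [g, g], and since the derivative along such a chi' is nilpotent and preserves
   weights, chi(dg') = 0 for every other semi-invariant g'.  A power-series argument
   along the lines through a gives likewise chi(df_ij) = 0.  Consequently the brackets of
   f_ij, g(. + lam a) and g'(. + mu a) satisfy linear relations in lam and mu which force
   them to vanish (for lam = mu by polynomiality in mu).  Both brackets are
   biderivations, so commutativity passes from the generators to the algebra. *)

From HB Require Import structures.
From mathcomp Require Import all_boot all_order all_algebra.
From mathcomp Require Import reals complex mpoly.
From mathcomp Require Import zify.
Import GRing.Theory Num.Theory.
Set Implicit Arguments. Unset Strict Implicit. Unset Printing Implicit Defensive.
Local Open Scope ring_scope.

(** * Polynomial identities *)

Section PolynomialIdentities.
Variable K : numDomainType.

Lemma poly_eq0_nz (q : {poly K}) : (forall t, t != 0 -> q.[t] = 0) -> q = 0.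
Proof.
move=> q_nz; apply/eqP; apply: contraT => q_neq0.
pose roots := [seq i.+1%:R : K | i <- iota 0 (size q)].
have roots_q : all (root q) roots.
  by apply/allP => _ /mapP [i _ ->]; apply/rootP/q_nz; rewrite pnatr_eq0.
have uniq_roots : uniq roots.
  by rewrite map_inj_uniq ?iota_uniq // => i j /eqP; rewrite eqr_nat eqSS => /eqP.
by have := max_poly_roots q_neq0 roots_q uniq_roots; rewrite size_map size_iota ltnn.
Qed.

Lemma polyP_horner (p q : {poly K}) : (forall t, p.[t] = q.[t]) -> p = q.
Proof.
move=> pq; apply/eqP; rewrite -subr_eq0; apply/eqP/poly_eq0_nz => t _.
by rewrite hornerD hornerN pq subrr.
Qed.

Definition snoc_val n (v : 'I_n -> K) (t : K) (i : 'I_n.+1) : K :=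
  if unlift ord_max i is Some j then v j else t.

Lemma widen_ord_lift_max n (i : 'I_n) : widen_ord (leqnSn n) i = lift ord_max i.
Proof. by apply/val_inj; rewrite /= /bump leqNgt ltn_ord. Qed.

Lemma horner_map_muni n (p : {mpoly K[n.+1]}) v t :
  (map_poly (meval v) (muni p)).[t] = p.@[snoc_val v t].
Proof.
rewrite muniE (mevalE _ p) raddf_sum horner_sum; apply: eq_bigr => m _.
rewrite /= map_polyZ map_polyXn hornerZ hornerXn /= mevalZ mevalX.
rewrite big_ord_recr /= /snoc_val unlift_none mulrA; congr (_ * _ * _).
by apply: eq_bigr => i _; rewrite mnmE widen_ord_lift_max liftK.
Qed.

Lemma mpoly_eq0_meval n (p : {mpoly K[n]}) : (forall v, p.@[v] = 0) -> p = 0.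
Proof.
elim: n p => [|n IH] p p0.
  have p_const : p = (p@_0)%:MP.
    apply: msize1_polyC; rewrite msizeE.
    by apply/bigmax_leqP_seq => m _ _; rewrite mdegE big_ord0.
  by have := p0 (fun _ => 0); rewrite p_const mevalC => ->.
have muni_coef0 k : (muni p)`_k = 0.
  apply: IH => v; rewrite -coef_map.
  suff -> : map_poly (meval v) (muni p) = 0 by rewrite coef0.
  by apply: poly_eq0_nz => t _; rewrite horner_map_muni p0.
pose restr (m : 'X_{1..n.+1}) : 'X_{1..n} := [multinom m (widen_ord (leqnSn n) i) | i < n].
have restr_eq m m0 : (m == m0) = (restr m == restr m0) && (m0 ord_max == m ord_max).
  apply/eqP/andP => [->|[/eqP eq_restr /eqP eq_max]] //.
  apply/mnmP => i; case: (unliftP ord_max i) => [j ->|->] //.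
  by have := congr1 (fun m' : 'X_{1..n} => m' j) eq_restr; rewrite !mnmE widen_ord_lift_max.
apply/mpolyP => m0; rewrite mcoeff0.
have := congr1 (mcoeff (restr m0)) (muni_coef0 (m0 ord_max)); rewrite mcoeff0 => <-.
rewrite muniE coef_sum raddf_sum {1}(mpolyE p) raddf_sum /=; apply: eq_bigr => m _.
rewrite coefZ coefXn mcoeffZ -scalerAl mcoeffZ mcoeffX restr_eq.
by case: (_ == _ :> nat); rewrite ?mulr1 ?mulr0 ?mcoeff0 ?mcoeffX ?andbT ?andbF ?mulr_natr.
Qed.

End PolynomialIdentities.

(* Formal power series over a domain form a domain: a series whose product with a nonzero
   polynomial vanishes modulo every [X^D] is zero. *)
Lemma series_mul_poly_eq0 (K : idomainType) (c : nat -> K) (G : {poly K}) :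
  G != 0 -> (forall D, exists Q, (\sum_(d < D) c d *: 'X^d) * G = 'X^D * Q) ->
  forall d, c d = 0.
Proof.
move=> G_neq0 trunc0.
have [e Ge_neq0 Gi0] : exists2 e, G`_e != 0 & forall i, (i < e)%N -> G`_i = 0.
  have G_coef : exists e, G`_e != 0 by exists (size G).-1; rewrite -lead_coefE lead_coef_eq0.
  case: (ex_minnP G_coef) => e Ge e_min; exists e => // i lt_ie.
  by apply/eqP; apply: contraTT lt_ie => /e_min; rewrite -leqNgt.
elim/ltn_ind => d IH; have [Q eqQ] := trunc0 (d + e).+1.
have := congr1 (fun p : {poly K} => p`_(d + e)) eqQ.
rewrite coefXnM ltnSn mulr_suml coef_sum.
rewrite (bigD1 (Ordinal (leq_addr e d.+1 : (d < (d + e).+1)%N))) //= big1 => [|i /negbTE ne_id].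
  rewrite addr0 -scalerAl coefZ coefXnM ltnNge leq_addr /= addKn => /eqP.
  by rewrite mulf_eq0 (negbTE Ge_neq0) orbF => /eqP.
rewrite -scalerAl coefZ coefXnM; case: ltnP => [_|le_i]; first by rewrite mulr0.
case: (ltngtP i d) => [lt_id|lt_di|eq_id].
- by rewrite IH // mul0r.
- by rewrite Gi0 ?mulr0 //; move: lt_di le_i; clear; lia.
- by move: ne_id; rewrite -val_eqE /= eq_id eqxx.
Qed.

Lemma pencil_eq0 (K : idomainType) (X A lam mu : K) :
  lam != mu -> X + lam * A = 0 -> X + mu * A = 0 -> X = 0 /\ A = 0.
Proof.
move=> lam_mu X_lam X_mu.
have : (X + lam * A) - (X + mu * A) = (lam - mu) * A.
  by rewrite opprD addrACA subrr add0r mulrBl.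
rewrite X_lam X_mu subrr => /esym/eqP; rewrite mulf_eq0 subr_eq0 (negbTE lam_mu) => /eqP A0.
by split => //; move: X_mu; rewrite A0 mulr0 addr0.
Qed.

(** * Calculus of multivariate polynomials *)

Section MpolyCalculus.
Variables (K : comNzRingType) (n : nat).
Implicit Types (p q : {mpoly K[n]}) (v w c : 'I_n -> K).

Lemma meval_homogZ d p (s : K) v :
  p \is d.-homog -> p.@[fun i => s * v i] = s ^+ d * p.@[v].
Proof.
move=> p_homog; rewrite !mevalE mulr_sumr; apply: eq_big_seq => m m_supp.
rewrite mulrCA; congr (_ * _).
under eq_bigr do rewrite exprMn.
by rewrite big_split /= prodrXr -mdegE (dhomog_mf p_homog m_supp).
Qed.

Lemma msupp_mderiv p i m : m \in msupp (p^`M(i)) -> (m + U_(i))%MM \in msupp p.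
Proof. by rewrite !mcoeff_msupp mcoeff_mderiv; apply: contra => /eqP ->; rewrite mul0rn. Qed.

Lemma dhomog_mderiv d p i : p \is d.-homog -> p^`M(i) \is d.-1.-homog.
Proof.
move=> p_homog; apply/dhomogP => m /msupp_mderiv /(dhomog_mf p_homog).
by rewrite /= mdegD mdeg1 addn1 => <-.
Qed.

Lemma dhomog0_polyC p : p \is 0.-homog -> p = (p@_0)%:MP.
Proof.
move=> p_homog; apply: msize1_polyC; rewrite msizeE.
by apply/bigmax_leqP_seq => m /(dhomog_mf p_homog) /= ->.
Qed.

Lemma msize_mderiv p i : (msize (p^`M(i)) <= (msize p).-1)%N.
Proof.
rewrite [X in (X <= _)%N]msizeE; apply/bigmax_leqP_seq => m /msupp_mderiv m_supp _.
by have := msize_mdeg_lt m_supp; rewrite mdegD mdeg1 addn1; case: (msize p).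
Qed.

Lemma mderivXU i k : ('X_i : {mpoly K[n]})^`M(k) = ((i == k)%:R)%:MP.
Proof.
rewrite mderivX mnm1E; case: eqP => [->|_]; last by rewrite scale0r.
have -> : (U_(k) - U_(k))%MM = 0%MM by apply/mnmP => j; rewrite mnmBE subnn mnm0E.
by rewrite mpolyX0 scale1r.
Qed.

Definition shift_tuple c : n.-tuple {mpoly K[n]} := [tuple 'X_i + (c i)%:MP | i < n].

Lemma meval_comp_shift p c v : (p \mPo shift_tuple c).@[v] = p.@[fun i => v i + c i].
Proof.
rewrite comp_mpoly_meval; apply: meval_eq => i.
by rewrite tnth_mktuple mevalD mevalXU mevalC.
Qed.

Lemma mderiv_comp_shift p c k :
  (p \mPo shift_tuple c)^`M(k) = p^`M(k) \mPo shift_tuple c.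
Proof.
pose commutes q := (q \mPo shift_tuple c)^`M(k) = q^`M(k) \mPo shift_tuple c.
have commutesM q1 q2 : commutes q1 -> commutes q2 -> commutes (q1 * q2).
  by rewrite /commutes !rmorphM /= !mderivM => -> ->; rewrite comp_mpolyD !rmorphM.
have commutesX m : commutes 'X_[m].
  have commutes1 : commutes 1.
    by rewrite /commutes comp_mpoly1 -mpolyC1 mderivC comp_mpolyC.
  rewrite mpolyXE_id; apply: big_ind => // i _.
  elim: (m i) => // e IH; rewrite exprS; apply: commutesM IH.
  rewrite /commutes comp_mpolyXU -tnth_nth tnth_mktuple mderivD mderivC addr0.
  by rewrite !mderivXU comp_mpolyC.
elim/mpolyind: p => [|a m p _ _ IH]; first by rewrite !(comp_mpoly0, mderiv0).
by rewrite comp_mpolyD !mderivD IH comp_mpolyD comp_mpolyZ !mderivZ comp_mpolyZ commutesX.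
Qed.

Definition line_poly p w c : {poly K} :=
  \sum_(m <- msupp p) p@_m *: \prod_(i < n) ((w i)%:P + c i *: 'X) ^+ m i.

Lemma horner_line_poly p w c s : (line_poly p w c).[s] = p.@[fun i => w i + s * c i].
Proof.
rewrite /line_poly horner_sum mevalE; apply: eq_bigr => m _.
rewrite hornerZ horner_prod; congr (_ * _); apply: eq_bigr => i _.
by rewrite horner_exp hornerD hornerC hornerZ hornerX mulrC.
Qed.

End MpolyCalculus.

Section GeneratedSubalgebra.
Variables (K : comNzRingType) (n : nat) (ev : {mpoly K[n]} -> K).
Variable B : {mpoly K[n]} -> {mpoly K[n]} -> K.
Hypothesis B_antisym : forall p q, B p q = - B q p.
Hypothesis BCl : forall c q, B c%:MP q = 0.
Hypothesis BDl : forall p1 p2 q, B (p1 + p2) q = B p1 q + B p2 q.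
Hypothesis BMl : forall p1 p2 q, B (p1 * p2) q = ev p1 * B p2 q + ev p2 * B p1 q.

Let gen_subalg_B_eq0l S p q :
  (forall q, S q -> B p q = 0) -> gen_subalg S q -> B p q = 0.
Proof.
move=> Bp; elim=> {q} [q /Bp //|c|q1 q2 _ B1 _ B2|q1 q2 _ B1 _ B2]; rewrite B_antisym.
- by rewrite BCl oppr0.
- by rewrite BDl !(B_antisym _ p) B1 B2 !oppr0 addr0 oppr0.
- by rewrite BMl !(B_antisym _ p) B1 B2 !oppr0 !mulr0 addr0 oppr0.
Qed.

Lemma gen_subalg_biderivation_eq0 S p q :
  (forall p q, S p -> S q -> B p q = 0) ->
  gen_subalg S p -> gen_subalg S q -> B p q = 0.
Proof.
move=> BS Sp; elim: Sp q => {p} [p Sp|c|p1 p2 _ B1 _ B2|p1 p2 _ B1 _ B2] q Sq.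
- by apply: gen_subalg_B_eq0l Sq => q'; apply: BS.
- exact: BCl.
- by rewrite BDl B1 // B2 // addr0.
- by rewrite BMl B1 // B2 // !mulr0 addr0.
Qed.

End GeneratedSubalgebra.

(** * Lie-Poisson calculus on S(g) *)

Section LiePoisson.
Variables (R : realType) (n : nat).
Local Notation C := R[i].
Local Notation V := 'rV[C]_n.
Implicit Types (x y z xi eta chi : V) (p q g : {mpoly C[n]}).

(* [ev] and [dgrad] are locked copies of evaluation and of [grad], and [dderiv] and
   [ad_mpoly] below are locked too: unification otherwise unfolds them down to the
   arithmetic of [R[i]], which is prohibitively slow. *)
Fact ev_key : unit. Proof. by []. Qed.
Definition ev : {mpoly C[n]} -> V -> C := locked_with ev_key (fun p x => p.@[valu x]).
Canonical ev_unlockable := [unlockable fun ev].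

Fact dgrad_key : unit. Proof. by []. Qed.
Definition dgrad : {mpoly C[n]} -> V -> V := locked_with dgrad_key (@grad R n).
Canonical dgrad_unlockable := [unlockable fun dgrad].

Lemma pairingDl x y xi : pairing (x + y) xi = pairing x xi + pairing y xi.
Proof. by rewrite -big_split; apply: eq_bigr => k _; rewrite mxE mulrDl. Qed.
Lemma pairingDr x xi eta : pairing x (xi + eta) = pairing x xi + pairing x eta.
Proof. by rewrite -big_split; apply: eq_bigr => k _; rewrite mxE mulrDr. Qed.
Lemma pairingZl c x xi : pairing (c *: x) xi = c * pairing x xi.
Proof. by rewrite mulr_sumr; apply: eq_bigr => k _; rewrite mxE mulrA. Qed.
Lemma pairingZr c x xi : pairing x (c *: xi) = c * pairing x xi.
Proof. by rewrite mulr_sumr; apply: eq_bigr => k _; rewrite mxE mulrCA. Qed.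
Lemma pairing0r x : pairing x 0 = 0.
Proof. by rewrite -(scale0r 0) pairingZr mul0r. Qed.
Lemma pairingNr x xi : pairing x (- xi) = - pairing x xi.
Proof. by rewrite -scaleN1r pairingZr mulN1r. Qed.
Lemma pairing_sumr x (I : Type) (r : seq I) (P : pred I) (F : I -> V) :
  pairing x (\sum_(i <- r | P i) F i) = \sum_(i <- r | P i) pairing x (F i).
Proof. by apply: (big_morph (pairing x) (pairingDr x)); rewrite pairing0r. Qed.

Lemma evE p x : ev p x = p.@[valu x].
Proof. by rewrite unlock. Qed.
Lemma evD p q x : ev (p + q) x = ev p x + ev q x.
Proof. by rewrite !evE mevalD. Qed.
Lemma evM p q x : ev (p * q) x = ev p x * ev q x.
Proof. by rewrite !evE mevalM. Qed.
Lemma evZ c p x : ev (c *: p) x = c * ev p x.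
Proof. by rewrite !evE mevalZ. Qed.
Lemma evN p x : ev (- p) x = - ev p x.
Proof. by rewrite !evE mevalN. Qed.
Lemma ev0 x : ev 0 x = 0.
Proof. by rewrite evE meval0. Qed.
Lemma evC c x : ev c%:MP x = c.
Proof. by rewrite evE mevalC. Qed.
Lemma ev_sum (I : Type) (r : seq I) (F : I -> {mpoly C[n]}) x :
  ev (\sum_(i <- r) F i) x = \sum_(i <- r) ev (F i) x.
Proof. by rewrite evE raddf_sum; apply: eq_bigr => i _; rewrite evE. Qed.

Lemma mpoly_eq0_ev p : (forall x, ev p x = 0) -> p = 0.
Proof.
move=> p0; apply: mpoly_eq0_meval => v; rewrite -(p0 (\row_i v i)) evE.
by apply: meval_eq => i; rewrite /valu mxE.
Qed.

Lemma mpoly_mul_eq0l p q : q != 0 -> p * q = 0 -> p = 0.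
Proof. by move=> q_neq0 /eqP; rewrite mulf_eq0 (negbTE q_neq0) orbF => /eqP. Qed.

Lemma dgradE p x : dgrad p x = \row_k ev (p^`M(k)) x.
Proof. by rewrite unlock; apply/rowP => k; rewrite !mxE evE. Qed.
Lemma grad_dgrad p x : grad p x = dgrad p x.
Proof. by rewrite unlock. Qed.
Lemma dgrad_entry p x k : dgrad p x 0 k = ev (p^`M(k)) x.
Proof. by rewrite dgradE mxE. Qed.
Lemma dgradD p q x : dgrad (p + q) x = dgrad p x + dgrad q x.
Proof. by apply/rowP => k; rewrite !dgradE !mxE mderivD evD. Qed.
Lemma dgradZ c p x : dgrad (c *: p) x = c *: dgrad p x.
Proof. by apply/rowP => k; rewrite !dgradE !mxE mderivZ evZ. Qed.
Lemma dgradC c x : dgrad c%:MP x = 0.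
Proof. by apply/rowP => k; rewrite dgradE !mxE mderivC -mpolyC0 evC. Qed.
Lemma dgradM p q x : dgrad (p * q) x = ev p x *: dgrad q x + ev q x *: dgrad p x.
Proof.
apply/rowP => k; rewrite !dgradE !mxE mderivM evD !evM addrC.
by congr (_ + _); rewrite mulrC.
Qed.
Lemma dgrad_sum (I : Type) (r : seq I) (F : I -> {mpoly C[n]}) x :
  dgrad (\sum_(i <- r) F i) x = \sum_(i <- r) dgrad (F i) x.
Proof.
elim: r => [|i r IH]; last by rewrite !big_cons dgradD IH.
by rewrite !big_nil -mpolyC0 dgradC.
Qed.

Lemma dgrad_dhomog0 p x : p \is 0.-homog -> dgrad p x = 0.
Proof. by move/dhomog0_polyC ->; exact: dgradC. Qed.

Lemma ev_homogZ d p s z : p \is d.-homog -> ev p (s *: z) = s ^+ d * ev p z.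
Proof.
move=> p_homog; rewrite !evE -(meval_homogZ _ _ p_homog).
by apply: meval_eq => i; rewrite /valu !mxE.
Qed.

Lemma dgrad_homogZ d p s z : p \is d.-homog -> dgrad p (s *: z) = s ^+ d.-1 *: dgrad p z.
Proof.
move=> p_homog; apply/rowP => k; rewrite [RHS]mxE !dgrad_entry.
exact: ev_homogZ (dhomog_mderiv k p_homog).
Qed.

Definition lin_mpoly xi : {mpoly C[n]} := \sum_i xi 0 i *: 'X_i.

Lemma lin_mpolyE xi x : ev (lin_mpoly xi) x = pairing x xi.
Proof.
rewrite ev_sum; apply: eq_bigr => i _.
by rewrite evE mevalZ mevalXU mulrC.
Qed.

Lemma mderiv_lin_mpoly xi k : (lin_mpoly xi)^`M(k) = (xi 0 k)%:MP.
Proof.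
rewrite [LHS]raddf_sum (bigD1 k) //= big1 => [|i ik].
  by rewrite addr0 mderivZ mderivXU eqxx mpolyC1 alg_mpolyC.
by rewrite mderivZ mderivXU (negbTE ik) mpolyC0 scaler0.
Qed.

Lemma dgrad_lin_mpoly xi x : dgrad (lin_mpoly xi) x = xi.
Proof. by apply/rowP => k; rewrite dgrad_entry mderiv_lin_mpoly evC. Qed.

Lemma ev_line_poly p u v s : (line_poly p (valu u) (valu v)).[s] = ev p (u + s *: v).
Proof. by rewrite horner_line_poly evE; apply: meval_eq => i; rewrite /valu !mxE. Qed.

Lemma ev_shift a lam g x : ev (shift_poly a lam g) x = ev g (x + lam *: a).
Proof.
rewrite !evE -[shift_poly _ _ _]/(g \mPo shift_tuple (fun k => lam * a 0 k)) meval_comp_shift.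
by apply: meval_eq => i; rewrite /valu !mxE.
Qed.

Lemma dgrad_shift a lam g x : dgrad (shift_poly a lam g) x = dgrad g (x + lam *: a).
Proof.
apply/rowP => k; rewrite !dgrad_entry.
rewrite -[shift_poly _ _ _]/(g \mPo shift_tuple (fun k => lam * a 0 k)) mderiv_comp_shift.
exact: ev_shift.
Qed.

Fact dderiv_key : unit. Proof. by []. Qed.
Definition dderiv : V -> {mpoly C[n]} -> {mpoly C[n]} :=
  locked_with dderiv_key (fun chi p => \sum_k chi 0 k *: p^`M(k)).
Canonical dderiv_unlockable := [unlockable fun dderiv].

Lemma dderiv_sum chi p : dderiv chi p = \sum_k chi 0 k *: p^`M(k).
Proof. by rewrite unlock. Qed.

Lemma dderivE chi p x : ev (dderiv chi p) x = pairing chi (dgrad p x).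
Proof.
rewrite dderiv_sum ev_sum; apply: eq_bigr => k _.
by rewrite evZ dgrad_entry.
Qed.

Lemma dderivZ chi c p : dderiv chi (c *: p) = c *: dderiv chi p.
Proof.
by rewrite !dderiv_sum scaler_sumr; apply: eq_bigr => k _; rewrite mderivZ !scalerA mulrC.
Qed.

Lemma mderiv_dderiv chi p k : (dderiv chi p)^`M(k) = dderiv chi (p^`M(k)).
Proof.
by rewrite !dderiv_sum raddf_sum; apply: eq_bigr => j _; rewrite /= mderivZ mderiv_comm.
Qed.

Lemma dderiv2E chi eta p :
  dderiv chi (dderiv eta p) = \sum_j \sum_k (chi 0 j * eta 0 k) *: p^`M(j)^`M(k).
Proof.
rewrite dderiv_sum; apply: eq_bigr => j _; rewrite mderiv_dderiv dderiv_sum scaler_sumr.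
by apply: eq_bigr => k _; rewrite scalerA.
Qed.

Lemma dderivC chi eta p : dderiv chi (dderiv eta p) = dderiv eta (dderiv chi p).
Proof.
rewrite !dderiv2E exchange_big; apply: eq_bigr => k _; apply: eq_bigr => j _.
by rewrite mulrC mderiv_comm.
Qed.

Lemma dgrad_dderiv chi p x : dgrad (dderiv chi p) x = \sum_k chi 0 k *: dgrad (p^`M(k)) x.
Proof. by rewrite dderiv_sum dgrad_sum; apply: eq_bigr => k _; rewrite dgradZ. Qed.

Lemma msize_dderiv chi p : (msize (dderiv chi p) <= (msize p).-1)%N.
Proof.
rewrite dderiv_sum.
apply: (big_ind (fun q : {mpoly C[n]} => msize q <= (msize p).-1)%N) => [||k _].
- by rewrite msize0.
- by move=> q1 q2 h1 h2; rewrite (leq_trans (msizeD_le _ _)) // geq_max h1 h2.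
- by rewrite (leq_trans (msizeZ_le _ _)) // msize_mderiv.
Qed.

Variable lie : V -> V -> V.
Hypothesis lie_bracket : is_lie_bracket lie.

Let lieDZl c x y z : lie (c *: x + y) z = c *: lie x z + lie y z.
Proof. by case: lie_bracket. Qed.
Let lieDZr c x y z : lie x (c *: y + z) = c *: lie x y + lie x z.
Proof. by case: lie_bracket. Qed.

Lemma lieDl x y z : lie (x + y) z = lie x z + lie y z.
Proof. by have := lieDZl 1 x y z; rewrite !scale1r. Qed.
Lemma lieDr x y z : lie z (x + y) = lie z x + lie z y.
Proof. by have := lieDZr 1 z x y; rewrite !scale1r. Qed.
Lemma lie0l z : lie 0 z = 0.
Proof. by apply: (@addrI _ (lie 0 z)); rewrite -lieDl !addr0. Qed.
Lemma lie0r z : lie z 0 = 0.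
Proof. by apply: (@addrI _ (lie z 0)); rewrite -lieDr !addr0. Qed.
Lemma lieZl c x z : lie (c *: x) z = c *: lie x z.
Proof. by have := lieDZl c x 0 z; rewrite !addr0 lie0l addr0. Qed.
Lemma lieZr c x z : lie z (c *: x) = c *: lie z x.
Proof. by have := lieDZr c z x 0; rewrite !addr0 lie0r addr0. Qed.
Lemma lieNr x z : lie z (- x) = - lie z x.
Proof. by rewrite -scaleN1r lieZr scaleN1r. Qed.
Lemma lieC x y : lie x y = - lie y x.
Proof.
have lie_xx u : lie u u = 0 by case: lie_bracket.
apply/eqP; rewrite -addr_eq0.
by have := lie_xx (x + y); rewrite lieDl !lieDr !lie_xx add0r addr0 => ->.
Qed.
Lemma lie_sumr z (I : Type) (r : seq I) (F : I -> V) :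
  lie z (\sum_(i <- r) F i) = \sum_(i <- r) lie z (F i).
Proof.
elim: r => [|i r IH]; last by rewrite !big_cons lieDr IH.
by rewrite !big_nil lie0r.
Qed.

Lemma lie_expand x xi : lie xi x = \sum_k x 0 k *: lie xi (delta_mx 0 k).
Proof. by rewrite {1}(row_sum_delta x) lie_sumr; apply: eq_bigr => k _; rewrite lieZr. Qed.

Definition coad xi y : V := \row_j pairing y (lie xi (delta_mx 0 j)).

Lemma pairing_coad xi y v : pairing y (lie xi v) = pairing (coad xi y) v.
Proof.
rewrite lie_expand pairing_sumr; apply: eq_bigr => j _.
by rewrite pairingZr mxE mulrC.
Qed.

Definition bracket_at y x p q : C := pairing y (lie (dgrad p x) (dgrad q x)).

Lemma lp_bracketE p q x : lp_bracket lie p q x = bracket_at x x p q.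
Proof. by rewrite /lp_bracket !grad_dgrad. Qed.

Lemma frozen_bracketE a p q x : frozen_bracket lie a p q x = bracket_at a x p q.
Proof. by rewrite /frozen_bracket !grad_dgrad. Qed.

Lemma pairing_lieC y u v : pairing y (lie u v) = - pairing y (lie v u).
Proof. by rewrite lieC pairingNr. Qed.

Lemma pairing_lie_combl y a b u v w :
  pairing y (lie (a *: u + b *: v) w) = a * pairing y (lie u w) + b * pairing y (lie v w).
Proof. by rewrite lieDl !lieZl pairingDr !pairingZr. Qed.

Lemma pairing_lieDl y u v w :
  pairing y (lie (u + v) w) = pairing y (lie u w) + pairing y (lie v w).
Proof. by rewrite lieDl pairingDr. Qed.

Lemma bracket_atC y x p q : bracket_at y x p q = - bracket_at y x q p.
Proof. exact: pairing_lieC. Qed.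

Lemma gen_subalg_bracket_at_eq0 y x S p q :
  (forall p q, S p -> S q -> bracket_at y x p q = 0) ->
  gen_subalg S p -> gen_subalg S q -> bracket_at y x p q = 0.
Proof.
apply: (@gen_subalg_biderivation_eq0 _ _ (fun p => ev p x)) => [{}p {}q|c {}q|p1 p2 {}q|p1 p2 {}q].
- exact: bracket_atC.
- by rewrite /bracket_at dgradC lie0l pairing0r.
- by rewrite /bracket_at dgradD pairing_lieDl.
- by rewrite /bracket_at dgradM pairing_lie_combl.
Qed.

Fact ad_mpoly_key : unit. Proof. by []. Qed.
Definition ad_mpoly : V -> {mpoly C[n]} -> {mpoly C[n]} :=
  locked_with ad_mpoly_key (fun xi p => \sum_k lin_mpoly (lie xi (delta_mx 0 k)) * p^`M(k)).
Canonical ad_mpoly_unlockable := [unlockable fun ad_mpoly].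

Lemma ad_mpoly_sum xi p : ad_mpoly xi p = \sum_k lin_mpoly (lie xi (delta_mx 0 k)) * p^`M(k).
Proof. by rewrite unlock. Qed.

Lemma ad_mpolyE xi p x : ev (ad_mpoly xi p) x = pairing x (lie xi (dgrad p x)).
Proof.
rewrite ad_mpoly_sum (lie_expand (dgrad p x)) pairing_sumr ev_sum; apply: eq_bigr => k _.
by rewrite evM lin_mpolyE pairingZr dgrad_entry mulrC.
Qed.

Lemma dgrad_lin_mpolyM xi q x :
  dgrad (lin_mpoly xi * q) x = pairing x xi *: dgrad q x + ev q x *: xi.
Proof. by rewrite dgradM lin_mpolyE dgrad_lin_mpoly. Qed.

Lemma ad_mpolyZ xi c p : ad_mpoly xi (c *: p) = c *: ad_mpoly xi p.
Proof.
by rewrite !ad_mpoly_sum scaler_sumr; apply: eq_bigr => k _; rewrite mderivZ scalerAr.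
Qed.

Lemma dgrad_ad_mpoly xi p x :
  dgrad (ad_mpoly xi p) x = lie xi (dgrad p x) + dgrad (dderiv (coad xi x) p) x.
Proof.
rewrite ad_mpoly_sum dgrad_sum dgrad_dderiv (lie_expand (dgrad p x)) addrC -big_split /=.
by apply: eq_bigr => k _; rewrite dgrad_lin_mpolyM dgrad_entry mxE.
Qed.

Lemma ad_mpoly_pairing xi eta p x :
  pairing x (lie xi (dgrad (ad_mpoly eta p) x)) =
  pairing x (lie xi (lie eta (dgrad p x))) + ev (dderiv (coad xi x) (dderiv (coad eta x) p)) x.
Proof. by rewrite dgrad_ad_mpoly lieDr pairingDr [in X in _ + X]pairing_coad dderivE. Qed.

Lemma lie_jacobi u v w : lie u (lie v w) - lie v (lie u w) = lie (lie u v) w.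
Proof.
have jacobi : lie u (lie v w) + lie v (lie w u) + lie w (lie u v) = 0.
  by case: lie_bracket.
by move/eqP: jacobi; rewrite (lieC w u) lieNr (lieC w) subr_eq0 => /eqP.
Qed.

Lemma ad_mpoly_comm xi eta p x :
  ev (ad_mpoly xi (ad_mpoly eta p)) x - ev (ad_mpoly eta (ad_mpoly xi p)) x =
  ev (ad_mpoly (lie xi eta) p) x.
Proof.
rewrite !ad_mpolyE !ad_mpoly_pairing [in X in _ - X]dderivC opprD addrACA subrr addr0.
by rewrite -pairingNr -pairingDr lie_jacobi.
Qed.

Lemma dderiv_ad_mpoly chi xi p x :
  ev (dderiv chi (ad_mpoly xi p)) x =
  pairing chi (lie xi (dgrad p x)) + ev (ad_mpoly xi (dderiv chi p)) x.
Proof.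
rewrite dderivE dgrad_ad_mpoly pairingDr ad_mpolyE (pairing_coad xi x).
by rewrite -!dderivE dderivC.
Qed.

(** * Semi-invariants *)

Definition has_weight g chi :=
  forall xi x, pairing x (lie xi (dgrad g x)) = pairing chi xi * ev g x.

Lemma semi_invariant_weight g : semi_invariant lie g -> g != 0 /\ exists chi, has_weight g chi.
Proof.
move=> [g_neq0 [chi g_chi]]; split => //; exists chi => xi x.
by have := g_chi (lin_mpoly xi) x; rewrite lp_bracketE /bracket_at grad_dgrad -evE dgrad_lin_mpoly.
Qed.

Lemma ad_mpoly_weight g chi xi : has_weight g chi -> ad_mpoly xi g = pairing chi xi *: g.
Proof.
move=> g_chi; apply/subr0_eq/mpoly_eq0_ev => x.
by rewrite evD evN ad_mpolyE g_chi evZ subrr.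
Qed.

Lemma weight_lie_eq0 g chi xi eta :
  has_weight g chi -> g != 0 -> pairing chi (lie xi eta) = 0.
Proof.
move=> g_chi g_neq0.
suff : pairing chi (lie xi eta) *: g = 0.
  by move/eqP; rewrite scaler_eq0 (negbTE g_neq0) orbF => /eqP.
apply: mpoly_eq0_ev => x; rewrite evZ -g_chi -ad_mpolyE -ad_mpoly_comm.
rewrite !(ad_mpoly_weight _ g_chi) !ad_mpolyZ !(ad_mpoly_weight _ g_chi) !evZ.
by rewrite mulrCA subrr.
Qed.

Lemma has_weight_dderiv g chi chi' :
  has_weight g chi -> (forall xi eta, pairing chi' (lie xi eta) = 0) ->
  has_weight (dderiv chi' g) chi.
Proof.
move=> g_chi chi'_lie xi x; rewrite -ad_mpolyE.
apply: (addrI (pairing chi' (lie xi (dgrad g x)))).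
by rewrite -dderiv_ad_mpoly (ad_mpoly_weight _ g_chi) dderivZ evZ chi'_lie !add0r.
Qed.

Lemma weight_cross p q al be x : has_weight p al -> has_weight q be ->
  pairing be (dgrad p x) * ev q x = - (pairing al (dgrad q x) * ev p x).
Proof. by move=> p_al q_be; rewrite -q_be pairing_lieC p_al. Qed.

Lemma msize_iter_dderiv chi p k : (msize (iter k (dderiv chi) p) <= msize p - k)%N.
Proof.
elim: k => [|k IH]; first by rewrite subn0.
by rewrite iterS (leq_trans (msize_dderiv _ _)) // subnS -!subn1 leq_sub2r.
Qed.

(* [dderiv chi'] is nilpotent and preserves the weight [chi]; the last nonzero
   iterate [f] of [g] satisfies [chi (dg') f = 0] by [weight_cross]. *)
Lemma weight_grad_eq0 g chi g' chi' x :
  has_weight g chi -> has_weight g' chi' -> g != 0 -> g' != 0 ->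
  pairing chi (dgrad g' x) = 0.
Proof.
move=> g_chi g'_chi' g_neq0 g'_neq0.
pose f k := iter k (dderiv chi') g.
have f_chi k : has_weight (f k) chi.
  elim: k => [|k IH] //; apply: has_weight_dderiv IH _ => xi eta.
  exact: weight_lie_eq0 g'_chi' g'_neq0.
have f_vanishes : exists k, f k == 0.
  exists (msize g); rewrite -msize_poly_eq0 -leqn0.
  by rewrite (leq_trans (msize_iter_dderiv _ _ _)) // subnn.
case: (ex_minnP f_vanishes) => [[|k]]; first by rewrite (negbTE g_neq0).
move=> /eqP fk1_eq0 k_min.
have fk_neq0 : f k != 0 by apply/negP => /k_min; rewrite ltnn.
suff : dderiv chi g' * f k = 0.
  by move/(mpoly_mul_eq0l fk_neq0) => D0; rewrite -dderivE D0 ev0.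
apply: mpoly_eq0_ev => y; rewrite evM dderivE.
have := weight_cross y (f_chi k) g'_chi'.
by rewrite -dderivE [dderiv _ _]fk1_eq0 ev0 mul0r => /esym/eqP; rewrite oppr_eq0 => /eqP.
Qed.

(** * Commutation of the generators *)

Lemma local_invariant_recursion a F : local_invariant_at lie a F ->
  (forall d xi y, pairing a (lie xi (dgrad (F d.+1) y)) + pairing y (lie xi (dgrad (F d) y)) = 0)
  /\ (forall d, F d \is d.-homog).
Proof. by move=> [[F_homog _] F_rec]; split => // d xi y; rewrite -!grad_dgrad. Qed.

Lemma lenard_chain_eq0 a y (u v : nat -> V) :
  (forall d xi, pairing a (lie xi (u d.+1)) + pairing y (lie xi (u d)) = 0) ->
  (forall d xi, pairing a (lie xi (v d.+1)) + pairing y (lie xi (v d)) = 0) ->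
  v 0 = 0 ->
  forall j k, pairing y (lie (u j) (v k)) = 0 /\ pairing a (lie (u j) (v k)) = 0.
Proof.
move=> u_rec v_rec v0.
have y_eq0 k j : pairing y (lie (u j) (v k)) = 0.
  elim: k j => [|k IH] j; first by rewrite v0 lie0r pairing0r.
  have := v_rec k (u j.+1); rewrite IH addr0 => a_eq0.
  have := u_rec j (v k.+1); rewrite pairing_lieC a_eq0 oppr0 add0r pairing_lieC.
  by move/eqP; rewrite oppr_eq0 => /eqP.
move=> j k; split; first exact: y_eq0.
case: k => [|k]; first by rewrite v0 lie0r pairing0r.
by have := v_rec k (u j); rewrite y_eq0 addr0.
Qed.

Lemma shift_poly_neq0 a lam g : g != 0 -> shift_poly a lam g != 0.
Proof.
apply: contraNneq => g_shift0; apply/eqP/mpoly_eq0_ev => x.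
by rewrite -[x](subrK (lam *: a)) -ev_shift g_shift0 ev0.
Qed.

Section LocalInvariantAndSemiInvariant.
Variables (a : V) (F : nat -> {mpoly C[n]}) (g : {mpoly C[n]}) (chi : V).
Hypothesis F_rec :
  forall d xi y, pairing a (lie xi (dgrad (F d.+1) y)) + pairing y (lie xi (dgrad (F d) y)) = 0.
Hypothesis F_homog : forall d, F d \is d.-homog.
Hypothesis g_chi : has_weight g chi.
Hypothesis g_neq0 : g != 0.

Let dgrad_F0 y : dgrad (F 0) y = 0.
Proof. exact: dgrad_dhomog0. Qed.

Lemma pairing_lie_dgrad_homogZ e s z w :
  pairing (s *: z) (lie (dgrad (F e) (s *: z)) w) = s ^+ e * pairing z (lie (dgrad (F e) z) w).
Proof.
case: e => [|e]; first by rewrite !dgrad_F0 lie0l !pairing0r mulr0.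
by rewrite (dgrad_homogZ _ _ (F_homog e.+1)) lieZl pairingZr pairingZl mulrA -exprSr.
Qed.

Lemma weight_invariant_step d s z :
  let Q e := pairing z (lie (dgrad (F e) z) (dgrad g (a + s *: z))) in
  s ^+ d * pairing chi (dgrad (F d.+1) z) * ev g (a + s *: z) =
  s ^+ d.+1 * Q d.+1 - s ^+ d * Q d.
Proof.
move=> Q; have rec := F_rec d (dgrad g (a + s *: z)) (s *: z).
rewrite pairing_lieC [X in _ + X]pairing_lieC pairing_lie_dgrad_homogZ -opprD in rec.
move/eqP: rec; rewrite oppr_eq0 addr_eq0 => /eqP rec.
rewrite -pairingZr -(dgrad_homogZ _ _ (F_homog d.+1)) -g_chi pairingDl.
by rewrite pairing_lie_dgrad_homogZ rec addrC.
Qed.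

Lemma weight_invariant_sum D s z :
  \sum_(0 <= d < D) s ^+ d * pairing chi (dgrad (F d.+1) z) * ev g (a + s *: z) =
  s ^+ D * pairing z (lie (dgrad (F D) z) (dgrad g (a + s *: z))).
Proof.
rewrite (@telescope_sumr_eq _ 0 D
  (fun e => s ^+ e * pairing z (lie (dgrad (F e) z) (dgrad g (a + s *: z))))) //.
  by rewrite dgrad_F0 lie0l pairing0r mulr0 subr0.
by move=> d _; exact: weight_invariant_step.
Qed.

(* Along the line [a + s z], the identities above say that the power series
   [sum_d chi (dF_(d+1) z) s^d] times the polynomial [s |-> g (a + s z)] vanishes. *)
Lemma weight_dgrad_invariant_eq0 j z : pairing chi (dgrad (F j) z) = 0.
Proof.
have chi_dF_g y : pairing chi (dgrad (F j) y) * ev g (a + y) = 0.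
  pose G := line_poly g (valu a) (valu y).
  have [G0|G_neq0] := eqVneq G 0.
    by have := ev_line_poly g a y 1; rewrite -/G G0 horner0 scale1r => <-; rewrite mulr0.
  case: j => [|j]; first by rewrite dgrad_F0 pairing0r mul0r.
  suff -> : pairing chi (dgrad (F j.+1) y) = 0 by rewrite mul0r.
  apply: (series_mul_poly_eq0 (c := fun d => pairing chi (dgrad (F d.+1) y)) G_neq0) => D.
  exists (line_poly (dderiv (coad (dgrad (F D) y) y) g) (valu a) (valu y)).
  apply: polyP_horner => s; rewrite !hornerM hornerXn !ev_line_poly dderivE -pairing_coad.
  rewrite -weight_invariant_sum big_mkord horner_sum mulr_suml; apply: eq_bigr => d _.
  by rewrite hornerZ hornerXn [_ * s ^+ d]mulrC.
suff : dderiv chi (F j) * shift_poly a 1 g = 0.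
  by move/(mpoly_mul_eq0l (shift_poly_neq0 _ _ g_neq0)) => D0; rewrite -dderivE D0 ev0.
apply: mpoly_eq0_ev => y.
by rewrite evM dderivE ev_shift scale1r addrC chi_dF_g.
Qed.

Lemma bracket_invariant_shift_eq0 lam x j :
  bracket_at x x (F j) (shift_poly a lam g) = 0 /\ bracket_at a x (F j) (shift_poly a lam g) = 0.
Proof.
rewrite /bracket_at dgrad_shift; set w := dgrad g (x + lam *: a).
have pencil e : pairing x (lie (dgrad (F e) x) w) + lam * pairing a (lie (dgrad (F e) x) w) = 0.
  by rewrite -pairingZl -pairingDl g_chi weight_dgrad_invariant_eq0 mul0r.
have chain e : pairing a (lie (dgrad (F e.+1) x) w) = - pairing x (lie (dgrad (F e) x) w).
  apply/eqP; rewrite -addr_eq0 pairing_lieC [X in _ + X]pairing_lieC -opprD oppr_eq0.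
  exact/eqP/F_rec.
elim: j => [|j [IHx IHa]]; first by rewrite dgrad_F0 lie0l !pairing0r.
have a_eq0 : pairing a (lie (dgrad (F j.+1) x) w) = 0 by rewrite chain IHx oppr0.
by split => //; have := pencil j.+1; rewrite a_eq0 mulr0 addr0.
Qed.

End LocalInvariantAndSemiInvariant.

Section TwoSemiInvariants.
Variables (a : V) (g g' : {mpoly C[n]}) (chi chi' : V).
Hypotheses (g_chi : has_weight g chi) (g'_chi' : has_weight g' chi').
Hypotheses (g_neq0 : g != 0) (g'_neq0 : g' != 0).

Lemma pairing_shifted_semi_invariants x lam mu :
  pairing (x + lam *: a) (lie (dgrad g (x + lam *: a)) (dgrad g' (x + mu *: a))) = 0 /\
  pairing (x + mu *: a) (lie (dgrad g (x + lam *: a)) (dgrad g' (x + mu *: a))) = 0.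
Proof.
split.
- by rewrite pairing_lieC g_chi (weight_grad_eq0 _ g_chi g'_chi' g_neq0 g'_neq0) mul0r oppr0.
- by rewrite g'_chi' (weight_grad_eq0 _ g'_chi' g_chi g'_neq0 g_neq0) mul0r.
Qed.

Lemma pairing_shifted_semi_invariants_neq x lam mu : lam != mu ->
  pairing x (lie (dgrad g (x + lam *: a)) (dgrad g' (x + mu *: a))) = 0 /\
  pairing a (lie (dgrad g (x + lam *: a)) (dgrad g' (x + mu *: a))) = 0.
Proof.
move=> lam_mu; have [] := pairing_shifted_semi_invariants x lam mu.
by rewrite !pairingDl !pairingZl; exact: pencil_eq0.
Qed.

(* For equal shifts: [s |-> <a, [dg w, dg' (w + s a)]>] is a polynomial vanishing
   at every [s <> 0]. *)
Lemma pairing_semi_invariants_eq0 w : pairing a (lie (dgrad g w) (dgrad g' w)) = 0.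
Proof.
pose L := line_poly (dderiv (coad (dgrad g w) a) g') (valu w) (valu a).
have L_eval s : L.[s] = pairing a (lie (dgrad g w) (dgrad g' (w + s *: a))).
  by rewrite ev_line_poly dderivE pairing_coad.
suff L0 : L = 0 by have := L_eval 0; rewrite L0 horner0 scale0r addr0.
apply: poly_eq0_nz => s s_neq0; rewrite L_eval.
have zero_s : 0 != s by rewrite eq_sym.
by have [_] := pairing_shifted_semi_invariants_neq w zero_s; rewrite scale0r addr0.
Qed.

Lemma bracket_shifts_eq0 lam mu x :
  bracket_at x x (shift_poly a lam g) (shift_poly a mu g') = 0 /\
  bracket_at a x (shift_poly a lam g) (shift_poly a mu g') = 0.
Proof.
rewrite /bracket_at [X in lie X _]dgrad_shift [X in lie _ X]dgrad_shift.
have [<-|lam_mu] := eqVneq lam mu; last exact: pairing_shifted_semi_invariants_neq.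
have a_eq0 := pairing_semi_invariants_eq0 (x + lam *: a); split => //.
have [+ _] := pairing_shifted_semi_invariants x lam lam.
by rewrite pairingDl pairingZl a_eq0 mulr0 addr0.
Qed.

End TwoSemiInvariants.

Lemma Fsi_generators_commute a m (f : 'I_m -> nat -> {mpoly C[n]}) p q x :
  (forall k, local_invariant_at lie a (f k)) ->
  Fsi_generators lie a f p -> Fsi_generators lie a f q ->
  bracket_at x x p q = 0 /\ bracket_at a x p q = 0.
Proof.
move=> /(_ _)/local_invariant_recursion inv.
case=> [[k [j [_ ->]]]|[g [lam [/semi_invariant_weight [g_neq0 [chi g_chi]] ->]]]];
case=> [[k' [j' [_ ->]]]|[g' [mu [/semi_invariant_weight [g'_neq0 [chi' g'_chi']] ->]]]].
- have [[rec_k _] [rec_k' homog_k']] := (inv k, inv k').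
  exact: (lenard_chain_eq0 (u := fun d => dgrad (f k d) x) (v := fun d => dgrad (f k' d) x)
    (fun d xi => rec_k d xi x) (fun d xi => rec_k' d xi x) (dgrad_dhomog0 x (homog_k' 0))).
- have [rec_k homog_k] := inv k.
  exact (bracket_invariant_shift_eq0 rec_k homog_k g'_chi' g'_neq0 mu x j).
- have [rec_k' homog_k'] := inv k'.
  have [x_eq0 a_eq0] := bracket_invariant_shift_eq0 rec_k' homog_k' g_chi g_neq0 lam x j'.
  by split; rewrite bracket_atC // ?x_eq0 ?a_eq0 oppr0.
- exact (bracket_shifts_eq0 a g_chi g'_chi' g_neq0 g'_neq0 lam mu x).
Qed.

End LiePoisson.

Theorem mainTheorem4 (R : realType) (n : nat)
  (lie : 'rV[R[i]]_n -> 'rV[R[i]]_n -> 'rV[R[i]]_n)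
  (Hlie : is_lie_bracket lie)
  (a : 'rV[R[i]]_n) (Ha : regular lie a)
  (f : 'I_(stab_dim lie a) -> nat -> {mpoly R[i][n]})
  (Hinv : forall k, local_invariant_at lie a (f k))
  (Hbasis : let D := \matrix_(k < stab_dim lie a, j < n) (germ_diff_at (f k)) 0 j in
            row_free D && (D == stab_mx lie a)%MS) :
  forall p q : {mpoly R[i][n]},
    gen_subalg (Fsi_generators lie a f) p ->
    gen_subalg (Fsi_generators lie a f) q ->
    (forall x, lp_bracket lie p q x = 0) /\
    (forall x, frozen_bracket lie a p q x = 0).
Proof.
move=> p q Gp Gq; split=> x; rewrite ?lp_bracketE ?frozen_bracketE;
  apply: (gen_subalg_bracket_at_eq0 Hlie _ Gp Gq) => p' q' Sp Sq;
  by have [] := Fsi_generators_commute Hlie x Hinv Sp Sq.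
Qed.
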